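(* Let $\mathcal{W},\mathcal{V}\subseteq\mathbb{R}^p$ be nonempty closed convex sets containing $\mathbf{0}$, let $\mathcal{Z}$ be a data space, and let $\ell:\mathcal{W}\times\mathcal{V}\times\mathcal{Z}\to\mathbb{R}$ be differentiable in $(\mathbf{w},\mathbf{v})$. Assume: (i) ($\rho$-strongly-convex-strongly-concave) for some $\rho>0$, for every $\mathbf{v}$ and $z$ the map $\mathbf{w}\mapsto\ell(\mathbf{w},\mathbf{v};z)$ is $\rho$-strongly convex, and for every $\mathbf{w}$ and $z$ the map $\mathbf{v}\mapsto\ell(\mathbf{w},\mathbf{v};z)$ is $\rho$-strongly concave; (ii) ($G$-Lipschitz) for some $G>0$, $\|\nabla_{\mathbf{w}}\ell(\mathbf{w},\mathbf{v};z)\|_2\le G$ and $\|\nabla_{\mathbf{v}}\ell(\mathbf{w},\mathbf{v};z)\|_2\le G$ for all $\mathbf{w},\mathbf{v},z$. Fix a dataset $S=\{z_1,\dots,z_n\}\in\mathcal{Z}^n$, privacy parameters $\epsilon,\delta>0$, a number of iterations $T\ge1$, step sizes $\eta_t=\frac{1}{\rho t}$, and noise level $\sigma=c\,\frac{G\sqrt{T\log(1/\delta)}}{n\epsilon}$ for a constant $c>0$. Run DP-GDA (described in the context) on $S$, producing $(\bar{\mathbf{w}}_T,\bar{\mathbf{v}}_T)$, and for any dataset $S'$ differing from $S$ in exactly one element, run DP-GDA on $S'$ with the same realizations of the Gaussian noise vectors, producing $(\bar{\mathbf{w}}_T',\bar{\mathbf{v}}_T')$. Let $\zeta\in(\exp(-p/8),1)$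 and $$p_\zeta=1+\Big(\frac{8\log(2T/\zeta)}{p}\Big)^{1/4},\quad g_{\mathbf{w}}=\|\bar{\mathbf{w}}^*-\bar{\mathbf{w}}_T\|_2,\quad g_{\mathbf{v}}=\|\bar{\mathbf{v}}^*-\bar{\mathbf{v}}_T\|_2,$$ where $\bar{\mathbf{w}}^*=\arg\min_{\mathbf{w}\in\mathcal{W}}L_S(\mathbf{w},\bar{\mathbf{v}}_T)$ and $\bar{\mathbf{v}}^*=\arg\max_{\mathbf{v}\in\mathcal{V}}L_S(\bar{\mathbf{w}}_T,\mathbf{v})$. Then with probability at least $1-\zeta$ (over the noise), for every such $S'$, $$\|\bar{\mathbf{w}}_T-\bar{\mathbf{w}}_T'\|_2+\|\bar{\mathbf{v}}_T-\bar{\mathbf{v}}_T'\|_2\le\gamma,$$ where $$\gamma=\frac{4G}{n\rho}+\frac{2\sigma\sqrt{p}\log(eT)}{T}p_\zeta+4\sqrt{\log(eT)}\sqrt{\frac{G^2}{\rho^2T}+\frac{\sigma^2p}{\rho^2T}p_\zeta^2+\frac{2G\sigma\sqrt{p}}{\rho^2T}p_\zeta+\frac{(g_{\mathbf{w}}+g_{\mathbf{v}})\sigma\sqrt{p}}{\rho\log(eT)}p_\zeta}.$$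
   Context: Empirical risk: $L_S(\mathbf{w},\mathbf{v})=\frac1n\sum_{i=1}^n\ell(\mathbf{w},\mathbf{v};z_i)$. A differentiable $f$ is $\rho$-strongly convex if $f(\mathbf{x})-f(\mathbf{x}')\ge\langle\nabla f(\mathbf{x}'),\mathbf{x}-\mathbf{x}'\rangle+\frac\rho2\|\mathbf{x}-\mathbf{x}'\|_2^2$; $f$ is $\rho$-strongly concave if $-f$ is $\rho$-strongly convex. DP-GDA (Differentially Private Gradient Descent Ascent) on dataset $S$: initialize $\mathbf{w}_1=\mathbf{0}$, $\mathbf{v}_1=\mathbf{0}$; for $t=1,\dots,T$, sample independent $b_{\mathbf{w}},b_{\mathbf{v}}\sim\mathcal{N}(0,\sigma^2I_p)$ and set $\mathbf{w}_{t+1}=\mathrm{Proj}_{\mathcal{W}}\big(\mathbf{w}_t-\eta_t(\nabla_{\mathbf{w}}L_S(\mathbf{w}_t,\mathbf{v}_t)+b_{\mathbf{w}})\big)$, $\mathbf{v}_{t+1}=\mathrm{Proj}_{\mathcal{V}}\big(\mathbf{v}_t+\eta_t(\nabla_{\mathbf{v}}L_S(\mathbf{w}_t,\mathbf{v}_t)+b_{\mathbf{v}})\big)$, where $\mathrm{Proj}$ is Euclidean projection; output $\bar{\mathbf{w}}_T=\frac1T\sum_{t=1}^T\mathbf{w}_t$, $\bar{\mathbf{v}}_T=\frac1T\sum_{t=1}^T\mathbf{v}_t$. The stability notion compares the outputs on two datasets differing in one element, with the two runs using identical noise draws. *)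

From HB Require Import structures.
From mathcomp Require Import all_boot all_order all_algebra.
From mathcomp Require Import all_classical all_reals all_analysis.
Set Implicit Arguments. Unset Strict Implicit. Unset Printing Implicit Defensive.
Import Order.TTheory GRing.Theory Num.Theory.
Import numFieldNormedType.Exports.
Local Open Scope classical_set_scope.
Local Open Scope ring_scope.

Section DPGDA.
Variable R : realType.

Definition vec (p : nat) := 'rV[R]_p.

Definition dotp {p} (u v : vec p) : R := \sum_(i < p) u ord0 i * v ord0 i.
Definition enorm {p} (u : vec p) : R := Num.sqrt (\sum_(i < p) u ord0 i ^+ 2).

Definition grad {p} (f : vec p -> R) (x : vec p) : vec p :=
  \row_(i < p) ('D_(delta_mx ord0 i : vec p) f x).

Definition convex_set_ {p} (C : set (vec p)) :=
  forall x y (t : R), C x -> C y -> 0 <= t <= 1 -> C (t *: x + (1 - t) *: y).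

Definition strongly_convex_on {p} (rho : R) (C : set (vec p)) (f : vec p -> R) :=
  forall x x', C x -> C x' ->
    f x - f x' >= dotp (grad f x') (x - x') + rho / 2 * enorm (x - x') ^+ 2.

Definition strongly_concave_on {p} (rho : R) (C : set (vec p)) (f : vec p -> R) :=
  strongly_convex_on rho C (fun x => - f x).

(* minimizer / maximizer over C (unique under the hypotheses) *)
Definition argmin_on {p} (C : set (vec p)) (f : vec p -> R) : vec p :=
  xget 0 [set x | C x /\ forall y, C y -> f x <= f y].
Definition argmax_on {p} (C : set (vec p)) (f : vec p -> R) : vec p :=
  xget 0 [set x | C x /\ forall y, C y -> f y <= f x].

Definition proj {p} (C : set (vec p)) (x : vec p) : vec p :=
  argmin_on C (fun y => enorm (x - y)).

Definition emp_risk {p n : nat} {Z : Type} (ell : vec p -> vec p -> Z -> R)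
  (S : 'I_n -> Z) (w v : vec p) : R :=
  n%:R^-1 * \sum_(i < n) ell w v (S i).

(* DP-GDA iterates: run k = (w_{k+1}, v_{k+1}); step t = k+1 uses step size
   eta t and noise bw k, bv k *)
Fixpoint dpgda_run {p n : nat} {Z : Type} (ell : vec p -> vec p -> Z -> R)
  (W V : set (vec p)) (eta : nat -> R) (S : 'I_n -> Z)
  (bw bv : nat -> vec p) (k : nat) : vec p * vec p :=
  match k with
  | 0 => (0, 0)
  | k'.+1 =>
    let wv := dpgda_run ell W V eta S bw bv k' in
    let w := wv.1 in let v := wv.2 in
    (proj W (w - eta k'.+1 *: (grad (fun w0 => emp_risk ell S w0 v) w + bw k')),
     proj V (v + eta k'.+1 *: (grad (fun v0 => emp_risk ell S w v0) v + bv k')))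
  end.

Definition dpgda_avg {p n : nat} {Z : Type} (ell : vec p -> vec p -> Z -> R)
  (W V : set (vec p)) (eta : nat -> R) (S : 'I_n -> Z)
  (bw bv : nat -> vec p) (T : nat) : vec p * vec p :=
  (T%:R^-1 *: \sum_(k < T) (dpgda_run ell W V eta S bw bv k).1,
   T%:R^-1 *: \sum_(k < T) (dpgda_run ell W V eta S bw bv k).2).

(* noise coordinates: (b, t, j) = j-th coordinate of b_w (b = true) or
   b_v (b = false) at iteration t+1 *)
Definition noise_index (T p : nat) := (bool * 'I_T * 'I_p)%type.

Definition noise_vec {T p : nat} (N : noise_index T p -> R) (b : bool)
  (k : nat) : vec p :=
  \row_(j < p) match @insub _ (fun i => (i < T)%N) 'I_T k with
               | Some t => N (b, t, j)
               | None => 0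
               end.

(* law N(0, s^2) on R; degenerate s = 0 is the Dirac mass at 0 *)
Definition gauss_law (s : R) (B : set R) : \bar R :=
  if s == 0 then @dirac _ R 0 R B else normal_prob 0 s B.

Definition gaussian_iid {d} {Omega : measurableType d} {I : finType}
  (P : probability Omega R) (N : Omega -> I -> R) (s : R) : Prop :=
  (forall i, measurable_fun setT (fun om => N om i)) /\
  (forall i (B : set R), measurable B ->
      P [set om | B (N om i)] = gauss_law s B) /\
  (forall B : I -> set R, (forall i, measurable (B i)) ->
      P [set om | forall i, B i (N om i)] =
      (\prod_(i : I) P [set om | B i (N om i)])%E).

Definition differ_in_one {n : nat} {Z : Type} (S S' : 'I_n -> Z) : Prop :=
  exists i, S' i <> S i /\ forall j, j <> i -> S' j = S j.

End DPGDA.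

From Pilot Require Import Defs.
From HB Require Import structures.
From mathcomp Require Import all_boot all_order all_algebra.
From mathcomp Require Import all_classical all_reals all_analysis.
From mathcomp Require Import ring lra.
Import Order.TTheory GRing.Theory Num.Theory.
Import numFieldNormedType.Exports.
Set Implicit Arguments. Unset Strict Implicit. Unset Printing Implicit Defensive.
Local Open Scope classical_set_scope.
Local Open Scope ring_scope.

(* Both runs use the same noise, so the noise cancels in the difference of the
   points being projected, and projections are nonexpansive: the noise never
   enters the distance between the two trajectories.  Strong convexity-concavity
   makes the gradient field of L_S strongly monotone, so a step of size eta
   contracts the squared distance by 1 - 2 eta rho, up to a perturbation 2G/n
   coming from the replaced sample and a term 8 eta^2 G^2 coming from the size
   of the gradients.  With eta_t = 1/(rho t) this recursion gives
   |w_t - w'_t| + |v_t - v'_t| <= 4G/(n rho) + 4G/(rho sqrt t), and averaging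
   with sum_{t<T} 1/sqrt t <= sqrt (T log(eT)) bounds the averaged outputs by
   4G/(n rho) + 4 sqrt(log(eT)) sqrt(G^2/(rho^2 T)) for every realisation of the
   noise.  The remaining terms of gamma are nonnegative.  The projections exist
   because W and V are bounded: a strongly convex function with bounded gradient
   has a bounded domain. *)

Lemma cauchy_schwarz_sum (R : realFieldType) m (a b : 'I_m -> R) :
  (\sum_i a i * b i) ^+ 2 <= (\sum_i a i ^+ 2) * (\sum_i b i ^+ 2).
Proof.
have lagrange : ((\sum_i a i ^+ 2) * (\sum_i b i ^+ 2) - (\sum_i a i * b i) ^+ 2) *+ 2
    = \sum_i \sum_j (a i * b j - a j * b i) ^+ 2.
  rewrite expr2 !big_distrlr /= mulr2n.
  rewrite [X in _ + (X - _)]exchange_big /= -!sumrB -big_split /=.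
  by apply: eq_bigr => i _; rewrite -!sumrB -big_split /=; apply: eq_bigr => j _; ring.
rewrite -subr_ge0 -(pmulrn_lge0 _ (ltn0Sn 1)) lagrange.
by apply: sumr_ge0 => i _; apply: sumr_ge0 => j _; exact: sqr_ge0.
Qed.

Lemma ler_sqr_ge0 (R : rcfType) (x y : R) : 0 <= y -> x ^+ 2 <= y ^+ 2 -> x <= y.
Proof.
move=> y0 le_sqr; apply: le_trans (ler_norm x) _.
by rewrite -sqrtr_sqr -(ger0_norm y0) -sqrtr_sqr ler_wsqrtr.
Qed.

Section Euclid.
Variables (R : realType) (p : nat).
Implicit Types u v w : vec R p.

Lemma dotpC u v : dotp u v = dotp v u.
Proof. by apply: eq_bigr => i _; rewrite mulrC. Qed.

Lemma dotpDl u v w : dotp (u + v) w = dotp u w + dotp v w.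
Proof. by rewrite /dotp -big_split; apply: eq_bigr => i _; rewrite mxE mulrDl. Qed.

Lemma dotpZl k u w : dotp (k *: u) w = k * dotp u w.
Proof. by rewrite /dotp mulr_sumr; apply: eq_bigr => i _; rewrite mxE mulrA. Qed.

Lemma dotpNl u w : dotp (- u) w = - dotp u w.
Proof. by rewrite -scaleN1r dotpZl mulN1r. Qed.

Lemma dotpBl u v w : dotp (u - v) w = dotp u w - dotp v w.
Proof. by rewrite dotpDl dotpNl. Qed.

Lemma dotpBr u v w : dotp w (u - v) = dotp w u - dotp w v.
Proof. by rewrite dotpC dotpBl !(dotpC w). Qed.

Lemma dotpZr k u w : dotp w (k *: u) = k * dotp w u.
Proof. by rewrite dotpC dotpZl dotpC. Qed.

Lemma dotpNr u w : dotp w (- u) = - dotp w u.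
Proof. by rewrite dotpC dotpNl dotpC. Qed.

Lemma dotp_suml m (F : 'I_m -> vec R p) w :
  dotp (\sum_(i < m) F i) w = \sum_(i < m) dotp (F i) w.
Proof.
elim/big_rec2: _ => [|i x y _ <-]; last by rewrite dotpDl.
by rewrite /dotp big1 // => j _; rewrite mxE mul0r.
Qed.

Lemma enorm_ge0 u : 0 <= enorm u.
Proof. exact: sqrtr_ge0. Qed.

Lemma enorm_sqrE u : enorm u ^+ 2 = \sum_(i < p) u ord0 i ^+ 2.
Proof. by rewrite sqr_sqrtr // sumr_ge0 // => i _; exact: sqr_ge0. Qed.

Lemma enorm_sqr u : enorm u ^+ 2 = dotp u u.
Proof. by rewrite enorm_sqrE; apply: eq_bigr => i _; rewrite expr2. Qed.

Lemma enormZ k u : enorm (k *: u) = `|k| * enorm u.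
Proof.
rewrite /enorm -sqrtr_sqr -sqrtrM ?sqr_ge0 // mulr_sumr.
by congr Num.sqrt; apply: eq_bigr => i _; rewrite mxE exprMn.
Qed.

Lemma enormN u : enorm (- u) = enorm u.
Proof. by rewrite -scaleN1r enormZ normrN normr1 mul1r. Qed.

Lemma enorm_distC u v : enorm (u - v) = enorm (v - u).
Proof. by rewrite -enormN opprB. Qed.

Lemma enorm0 : enorm (0 : vec R p) = 0.
Proof. by rewrite /enorm big1 ?sqrtr0 // => i _; rewrite mxE expr0n. Qed.

Lemma dotp_le u v : dotp u v <= enorm u * enorm v.
Proof.
apply: ler_sqr_ge0; first by rewrite mulr_ge0 ?enorm_ge0.
by rewrite exprMn !enorm_sqrE; exact: cauchy_schwarz_sum.
Qed.

Lemma enormD_sqr u v : enorm (u + v) ^+ 2 = enorm u ^+ 2 + 2 * dotp u v + enorm v ^+ 2.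
Proof. by rewrite !enorm_sqr !dotpDl ![dotp _ (_ + _)]dotpC !dotpDl (dotpC v u); ring. Qed.

Lemma enormB_sqr u v : enorm (u - v) ^+ 2 = enorm u ^+ 2 - 2 * dotp u v + enorm v ^+ 2.
Proof. by rewrite !enorm_sqr !dotpBl !dotpBr (dotpC v u); ring. Qed.

Lemma enormD u v : enorm (u + v) <= enorm u + enorm v.
Proof.
apply: ler_sqr_ge0; first by rewrite addr_ge0 ?enorm_ge0.
by rewrite enormD_sqr; have := dotp_le u v; lra.
Qed.

Lemma enormB u v : enorm (u - v) <= enorm u + enorm v.
Proof. by rewrite -(enormN v) enormD. Qed.

Lemma enorm_sum m (F : 'I_m -> vec R p) :
  enorm (\sum_(i < m) F i) <= \sum_(i < m) enorm (F i).
Proof.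
elim/big_rec2: _ => [|i x y _ le_xy]; first by rewrite enorm0.
by apply: le_trans (enormD _ _) _; rewrite lerD2l.
Qed.

Lemma coord_le_enorm u i : `|u ord0 i| <= enorm u.
Proof.
apply: ler_sqr_ge0; first exact: enorm_ge0.
rewrite enorm_sqrE real_normK ?num_real // (bigD1 i) //= lerDl.
by apply: sumr_ge0 => j _; exact: sqr_ge0.
Qed.

Lemma enorm_mean_le m (a : 'I_m -> vec R p) (G : R) : (0 < m)%N ->
  (forall i, enorm (a i) <= G) -> enorm (m%:R^-1 *: \sum_(i < m) a i) <= G.
Proof.
move=> m_gt0 le_aG; have m_pos : 0 < m%:R :> R by rewrite ltr0n.
rewrite enormZ ger0_norm ?invr_ge0 ?ler0n // ler_pdivrMl //.
apply: le_trans (enorm_sum _) _; apply: le_trans (ler_sum _ (fun i _ => le_aG i)) _.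
by rewrite sumr_const card_ord mulr_natl.
Qed.

Lemma enorm_mean_sub_except m (a b : 'I_m -> vec R p) (G : R) (k : 'I_m) :
  (forall j, j != k -> a j = b j) -> enorm (a k) <= G -> enorm (b k) <= G ->
  enorm (m%:R^-1 *: \sum_(i < m) a i - m%:R^-1 *: \sum_(i < m) b i) <= 2 * G / m%:R.
Proof.
move=> eq_ab le_aG le_bG; rewrite -scalerBr -sumrB (bigD1 k) //= big1 ?addr0.
  rewrite enormZ ger0_norm ?invr_ge0 ?ler0n // mulrC ler_wpM2r ?invr_ge0 ?ler0n //.
  by apply: le_trans (enormB _ _) _; lra.
by move=> j /eq_ab ->; rewrite subrr.
Qed.

Lemma enorm_mean_sub_le_mean m (a b : 'I_m -> vec R p) :
  enorm (m%:R^-1 *: \sum_(i < m) a i - m%:R^-1 *: \sum_(i < m) b i)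
    <= m%:R^-1 * \sum_(i < m) enorm (a i - b i).
Proof.
rewrite -scalerBr -sumrB enormZ ger0_norm ?invr_ge0 ?ler0n //.
by rewrite ler_wpM2l ?invr_ge0 ?ler0n // enorm_sum.
Qed.

Lemma perturbed_monotone_step (a b gw gw' hw gv gv' hv : vec R p) (rho G e eta : R) :
  0 <= eta ->
  rho * (enorm a ^+ 2 + enorm b ^+ 2) <= dotp (gw - gw') a - dotp (gv - gv') b ->
  enorm (gw' - hw) <= e -> enorm (gv' - hv) <= e ->
  enorm gw <= G -> enorm hw <= G -> enorm gv <= G -> enorm hv <= G ->
  enorm (a - eta *: (gw - hw)) ^+ 2 + enorm (b + eta *: (gv - hv)) ^+ 2 <=
    (1 - 2 * eta * rho) * (enorm a ^+ 2 + enorm b ^+ 2)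
    + 2 * eta * e * (enorm a + enorm b) + eta ^+ 2 * (8 * G ^+ 2).
Proof.
move=> eta_ge0 mono le_we le_ve le_gw le_hw le_gv le_hv.
have sqr_le (u u' : vec R p) :
    enorm u <= G -> enorm u' <= G -> enorm (u - u') ^+ 2 <= 4 * G ^+ 2.
  move=> le_u le_u'; have le_2G : enorm (u - u') <= 2 * G.
    by apply: le_trans (enormB _ _) _; lra.
  have := lerXn2r 2 (enorm_ge0 _) (le_trans (enorm_ge0 _) le_2G) le_2G.
  by rewrite exprMn; lra.
have cross : rho * (enorm a ^+ 2 + enorm b ^+ 2) - e * (enorm a + enorm b)
    <= dotp (gw - hw) a - dotp (gv - hv) b.
  have := le_trans (dotp_le (hw - gw') a) (ler_wpM2r (enorm_ge0 a) _).
  rewrite enorm_distC => /(_ _ le_we) le_a.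
  have le_b := le_trans (dotp_le (gv' - hv) b) (ler_wpM2r (enorm_ge0 b) le_ve).
  by move: mono le_a le_b; rewrite !dotpBl; lra.
have := ler_wpM2l eta_ge0 cross.
have := ler_wpM2l (sqr_ge0 eta) (sqr_le _ _ le_gw le_hw).
have := ler_wpM2l (sqr_ge0 eta) (sqr_le _ _ le_gv le_hv).
rewrite (enormB_sqr a) (enormD_sqr b) !dotpZr !enormZ !exprMn ger0_norm //.
rewrite (dotpC a) (dotpC b).
lra.
Qed.

End Euclid.

Section Projection.
Variables (R : realType) (p : nat) (C : set (vec R p)).
Hypotheses (closedC : closed C) (C0 : C 0).
Hypothesis boundedC : exists M, forall y, C y -> enorm y <= M.

Lemma nearest_point_exists x :
  exists y, C y /\ forall y', C y' -> enorm (x - y) <= enorm (x - y').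
Proof.
have [M CM] := boundedC.
have compactC : compact C.
  apply: bounded_closed_compact => //; exists M; split; first exact: num_real.
  move=> M' ltMM' y Cy; have le_yM' := le_trans (CM _ Cy) (ltW ltMM').
  rewrite /Num.norm /= mx_normrE; apply: bigmax_le => [|[i j] _ /=].
    exact: le_trans (enorm_ge0 y) le_yM'.
  by rewrite (ord1 i); exact: le_trans (coord_le_enorm _ _) le_yM'.
pose f y := \sum_(i < p) (x - y) ord0 i ^+ 2.
have f_cont : continuous f.
  apply: continuous_big => [|i _ y]; first exact: add_continuous.
  have sub_cont : {for y, continuous (fun y : vec R p => x - y)}.
    by apply: continuousB; [exact: cst_continuous | exact: cvg_id].
  exact: continuous_comp (continuous_comp sub_cont (@coord_continuous R 1 p ord0 i _))
                         (@exprn_continuous R 2 _).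
have [c Cc c_min] := EVT_min_rV (ex_intro _ 0 C0) compactC (continuous_subspaceT f_cont).
exists c; split=> [|y Cy]; first by rewrite inE in Cc.
by apply: ler_wsqrtr; apply: c_min; rewrite inE.
Qed.

Lemma nearest_point_obtuse x c y : convex_set_ C -> C c ->
  (forall y', C y' -> enorm (x - c) <= enorm (x - y')) -> C y ->
  dotp (x - c) (y - c) <= 0.
Proof.
move=> convC Cc c_min Cy.
set d := dotp (x - c) (y - c); set q := enorm (y - c) ^+ 2.
have q_ge0 : 0 <= q by exact: sqr_ge0.
have le_dq t : 0 < t -> t <= 1 -> 2 * d <= t * q.
  move=> t_gt0 t_le1.
  have Cz : C (t *: y + (1 - t) *: c) by apply: convC => //; rewrite ltW.
  have := lerXn2r 2 (enorm_ge0 _) (enorm_ge0 _) (c_min _ Cz).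
  have -> : x - (t *: y + (1 - t) *: c) = (x - c) - t *: (y - c).
    by apply/rowP => i; rewrite !mxE; ring.
  rewrite (enormB_sqr (x - c)) dotpZr enormZ exprMn real_normK ?num_real // -/d -/q => le_sqr.
  have : 0 <= t * (t * q - 2 * d) by rewrite mulrBr; lra.
  by rewrite pmulr_rge0 // subr_ge0.
rewrite leNgt; apply/negP => d_gt0.
have dq_gt0 : 0 < d + q by lra.
have t_le1 : d / (d + q) <= 1 by rewrite ler_pdivrMr // mul1r; lra.
have := le_dq _ (divr_gt0 d_gt0 dq_gt0) t_le1.
rewrite mulrAC ler_pdivlMr // => le_sqr.
have : 0 < d * d by exact: mulr_gt0.
have : 0 <= d * q by rewrite mulr_ge0 // ltW.
lra.
Qed.

Lemma proj_spec x :
  C (Defs.proj C x) /\ forall y, C y -> enorm (x - Defs.proj C x) <= enorm (x - y).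
Proof. exact: (xgetPex 0 (nearest_point_exists x)). Qed.

Lemma proj_nonexpansive x1 x2 : convex_set_ C ->
  enorm (Defs.proj C x1 - Defs.proj C x2) <= enorm (x1 - x2).
Proof.
move=> convC; have [C1 min1] := proj_spec x1; have [C2 min2] := proj_spec x2.
set p1 := Defs.proj C x1 in C1 min1 *; set p2 := Defs.proj C x2 in C2 min2 *.
have obtuse1 := nearest_point_obtuse convC C1 min1 C2.
have obtuse2 := nearest_point_obtuse convC C2 min2 C1.
have le_sqr : enorm (p1 - p2) ^+ 2 <= dotp (x1 - x2) (p1 - p2).
  move: obtuse1 obtuse2; rewrite enorm_sqr !dotpBl !dotpBr.
  have := dotpC p1 x1; have := dotpC p2 x1; have := dotpC p1 x2; have := dotpC p2 x2.
  have := dotpC p1 p2; lra.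
have [->|ne0] := eqVneq (enorm (p1 - p2)) 0; first exact: enorm_ge0.
have gt0 : 0 < enorm (p1 - p2) by rewrite lt_def ne0 enorm_ge0.
by rewrite -(ler_pM2r gt0) -expr2; apply: le_trans le_sqr (dotp_le _ _).
Qed.

End Projection.

Lemma strongly_convex_dom_bounded (R : realType) p (C : set (vec R p)) f (rho G : R) :
  0 < rho -> strongly_convex_on rho C f -> C 0 ->
  (forall x, C x -> enorm (grad f x) <= G) -> forall x, C x -> enorm x <= 2 * G / rho.
Proof.
move=> rho_gt0 convf C0 le_gradG x Cx.
have := convf _ _ C0 Cx; have := convf _ _ Cx C0.
rewrite !subr0 sub0r enormN dotpNr => h1 h2.
have mono : rho * enorm x ^+ 2 <= dotp (grad f x - grad f 0) x by rewrite dotpBl; lra.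
have le_2G : enorm (grad f x - grad f 0) <= 2 * G.
  by apply: le_trans (enormB _ _) _; have := le_gradG _ Cx; have := le_gradG _ C0; lra.
have key : rho * enorm x ^+ 2 <= 2 * G * enorm x.
  apply: le_trans mono (le_trans (dotp_le _ _) _).
  by rewrite ler_wpM2r ?enorm_ge0.
have [->|ne0] := eqVneq (enorm x) 0.
  have G_ge0 : 0 <= G := le_trans (enorm_ge0 _) (le_gradG _ C0).
  by rewrite divr_ge0 ?mulr_ge0 // ltW.
have gt0 : 0 < enorm x by rewrite lt_def ne0 enorm_ge0.
by rewrite ler_pdivlMr // mulrC -(ler_pM2r gt0) -mulrA -expr2.
Qed.

Section Gradients.
Variables (R : realType) (p : nat).
Implicit Types f : vec R p -> R.

Lemma mean_fctE n (f : 'I_n -> vec R p -> R) :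
  (fun y => n%:R^-1 * \sum_(i < n) f i y) = n%:R^-1 \*: \sum_(i < n) f i.
Proof. by apply/funext => y; rewrite fct_sumE. Qed.

Lemma derivable_mean n (f : 'I_n -> vec R p -> R) x e :
  (forall i, derivable (f i) x e) ->
  derivable (fun y => n%:R^-1 * \sum_(i < n) f i y) x e.
Proof. by move=> df; rewrite mean_fctE; exact/derivableZ/derivable_sum. Qed.

Lemma grad_mean n (f : 'I_n -> vec R p -> R) x :
  (forall i e, derivable (f i) x e) ->
  grad (fun y => n%:R^-1 * \sum_(i < n) f i y) x = n%:R^-1 *: \sum_(i < n) grad (f i) x.
Proof.
move=> df; apply/rowP => j; rewrite !mxE summxE mean_fctE.
rewrite deriveZ ?derive_sum //; last exact: derivable_sum.
by congr (_ * _); apply: eq_bigr => i _; rewrite mxE.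
Qed.

Lemma gradN f x : (forall e, derivable f x e) -> grad (fun y => - f y) x = - grad f x.
Proof. by move=> df; apply/rowP => j; rewrite !mxE; exact: deriveN. Qed.

Lemma strongly_convex_mean n (f : 'I_n -> vec R p -> R) rho C : (0 < n)%N ->
  (forall i x e, C x -> derivable (f i) x e) ->
  (forall i, strongly_convex_on rho C (f i)) ->
  strongly_convex_on rho C (fun x => n%:R^-1 * \sum_(i < n) f i x).
Proof.
move=> n_gt0 df convf x x' Cx Cx'.
rewrite grad_mean => [|i e]; last exact: df.
have -> : rho / 2 * enorm (x - x') ^+ 2 =
    n%:R^-1 * \sum_(i < n) (rho / 2 * enorm (x - x') ^+ 2).
  by rewrite sumr_const card_ord -[rho / 2 * _ *+ n]mulr_natl mulKf // pnatr_eq0 -lt0n.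
rewrite -mulrBr -sumrB dotpZl dotp_suml -mulrDr -big_split /=.
by rewrite ler_wpM2l ?invr_ge0 ?ler0n //; apply: ler_sum => i _; exact: convf.
Qed.

Lemma strongly_concave_mean n (f : 'I_n -> vec R p -> R) rho C : (0 < n)%N ->
  (forall i x e, C x -> derivable (f i) x e) ->
  (forall i, strongly_concave_on rho C (f i)) ->
  strongly_concave_on rho C (fun x => n%:R^-1 * \sum_(i < n) f i x).
Proof.
move=> n_gt0 df concf; rewrite /strongly_concave_on.
have -> : (fun x => - (n%:R^-1 * \sum_(i < n) f i x)) =
    (fun x => n%:R^-1 * \sum_(i < n) - f i x).
  by apply/funext => x; rewrite sumrN mulrN.
by apply: strongly_convex_mean => // i x e Cx; exact/derivableN/df.
Qed.

Lemma saddle_grad_monotone (W V : set (vec R p)) (L : vec R p -> vec R p -> R) rho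
    w v w' v' :
  (forall v, V v -> strongly_convex_on rho W (L^~ v)) ->
  (forall w, W w -> strongly_concave_on rho V (L w)) ->
  (forall w v e, W w -> V v -> derivable (L w) v e) ->
  W w -> V v -> W w' -> V v' ->
  rho * (enorm (w - w') ^+ 2 + enorm (v - v') ^+ 2) <=
    dotp (grad (L^~ v) w - grad (L^~ v') w') (w - w')
    - dotp (grad (L w) v - grad (L w') v') (v - v').
Proof.
move=> convL concL dL Ww Vv Ww' Vv'.
have h1 := convL _ Vv _ _ Ww' Ww; have h2 := convL _ Vv' _ _ Ww Ww'.
have h3 := concL _ Ww _ _ Vv' Vv; have h4 := concL _ Ww' _ _ Vv Vv'.
rewrite /= gradN in h3; last by move=> e; exact: dL.
rewrite /= gradN in h4; last by move=> e; exact: dL.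
move: h1 h2 h3 h4; rewrite (enorm_distC w') (enorm_distC v') !dotpBl !dotpBr !dotpNl.
lra.
Qed.

End Gradients.

Section Recursion.
Variable R : rcfType.

Lemma recursion_step (K b c X Y : R) : 1 <= K -> 0 <= b -> 0 <= c ->
  X <= (b + c / Num.sqrt K) ^+ 2 -> Y <= b + c / Num.sqrt K ->
  (1 - 2 / (K + 1)) * X + 2 * b * Y / (K + 1) + c ^+ 2 / (K + 1) ^+ 2
    <= (b + c / Num.sqrt (K + 1)) ^+ 2.
Proof.
move=> K_ge1 b_ge0 c_ge0 le_X le_Y.
have K_gt0 : 0 < K by lra.
have K1_gt0 : 0 < K + 1 by lra.
set a := c / Num.sqrt K; set a' := c / Num.sqrt (K + 1).
have a_ge0 : 0 <= a by rewrite divr_ge0 ?sqrtr_ge0.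
have a'_ge0 : 0 <= a' by rewrite divr_ge0 ?sqrtr_ge0.
have a_sqr : a ^+ 2 = c ^+ 2 / K by rewrite exprMn exprVn sqr_sqrtr // ltW.
have a'_sqr : a' ^+ 2 = c ^+ 2 / (K + 1) by rewrite exprMn exprVn sqr_sqrtr // ltW.
have le_aa' : K / (K + 1) * a <= a'.
  apply: ler_sqr_ge0 => //; rewrite exprMn a_sqr a'_sqr -subr_ge0.
  have -> : c ^+ 2 / (K + 1) - (K / (K + 1)) ^+ 2 * (c ^+ 2 / K) = c ^+ 2 / (K + 1) ^+ 2.
    by field; rewrite !gt_eqF.
  by rewrite divr_ge0 ?sqr_ge0.
have le_sqr_aa' : (1 - 2 / (K + 1)) * a ^+ 2 + c ^+ 2 / (K + 1) ^+ 2 <= a' ^+ 2.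
  rewrite a_sqr a'_sqr -subr_ge0.
  have -> : c ^+ 2 / (K + 1) - ((1 - 2 / (K + 1)) * (c ^+ 2 / K) + c ^+ 2 / (K + 1) ^+ 2)
      = c ^+ 2 / (K * (K + 1) ^+ 2).
    by field; rewrite !gt_eqF.
  by rewrite divr_ge0 ?sqr_ge0 // mulr_ge0 ?sqr_ge0 // ltW.
have coef_ge0 : 0 <= 1 - 2 / (K + 1) by rewrite subr_ge0 ler_pdivrMr //; lra.
have le_X' : (1 - 2 / (K + 1)) * X <= (1 - 2 / (K + 1)) * (b + a) ^+ 2 by exact: ler_wpM2l.
have le_Y' : 2 * b * Y / (K + 1) <= 2 * b * (b + a) / (K + 1).
  by apply: ler_wpM2r; [rewrite invr_ge0 ltW | apply: ler_wpM2l; rewrite ?mulr_ge0].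
have expand : (1 - 2 / (K + 1)) * (b + a) ^+ 2 + 2 * b * (b + a) / (K + 1)
    + c ^+ 2 / (K + 1) ^+ 2
  = b ^+ 2 + 2 * b * (K / (K + 1) * a)
    + ((1 - 2 / (K + 1)) * a ^+ 2 + c ^+ 2 / (K + 1) ^+ 2).
  by field; rewrite gt_eqF.
have : 2 * b * (K / (K + 1) * a) <= 2 * b * a' by apply: ler_wpM2l; rewrite ?mulr_ge0.
have -> : (b + a') ^+ 2 = b ^+ 2 + 2 * b * a' + a' ^+ 2 by ring.
lra.
Qed.

(* At [k = 0] the bound reads [y 0 <= b], since [c / Num.sqrt 0 = c / 0 = 0]. *)
Lemma sqrt_rate_recursion (b c : R) (x y : nat -> R) : 0 <= b -> 0 <= c ->
  x 0%N = 0 -> (forall k, 0 <= y k /\ y k ^+ 2 <= x k) ->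
  (forall k, x k.+1 <= (1 - 2 / k.+1%:R) * x k + 2 * b * y k / k.+1%:R
                       + c ^+ 2 / k.+1%:R ^+ 2) ->
  forall k, y k <= b + c / Num.sqrt k%:R.
Proof.
move=> b_ge0 c_ge0 x0 xy x_rec.
have bc_ge0 k : 0 <= b + c / Num.sqrt k%:R by rewrite addr_ge0 ?divr_ge0 ?sqrtr_ge0.
suff le_x k : x k <= (b + c / Num.sqrt k%:R) ^+ 2.
  by move=> k; have [y_ge0 le_yx] := xy k; apply: ler_sqr_ge0 (le_trans le_yx (le_x k)).
elim: k => [|[|k] IHk]; first by rewrite x0 sqr_ge0.
  have [y0_ge0 le_y0] := xy 0%N; rewrite x0 in le_y0.
  have y0 : y 0%N = 0 by apply/eqP; rewrite -sqrf_eq0 eq_le le_y0 sqr_ge0.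
  have := x_rec 0%N; rewrite x0 y0 mulr1n sqrtr1 divr1.
  have : c ^+ 2 <= (b + c) ^+ 2 by rewrite lerXn2r ?nnegrE ?addr_ge0 //; lra.
  lra.
have [y_ge0 le_yx] := xy k.+1.
have le_y := ler_sqr_ge0 (bc_ge0 _) (le_trans le_yx IHk).
apply: le_trans (x_rec _) _; rewrite -[k.+2%:R]natr1.
exact: recursion_step (ler1n R k.+1) b_ge0 c_ge0 IHk le_y.
Qed.

End Recursion.

Section Harmonic.
Variable R : realType.

Lemma ln_succ_sub_ge (m : R) : 0 < m -> (m + 1)^-1 <= ln (m + 1) - ln m.
Proof.
move=> m_gt0; have m1_gt0 : 0 < m + 1 by lra.
have : -1 < m / (m + 1) - 1 by have := divr_gt0 m_gt0 m1_gt0; lra.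
move/le_ln1Dx; rewrite addrC subrK lnM ?posrE ?invr_gt0 // lnV ?posrE //.
have -> : m / (m + 1) - 1 = - (m + 1)^-1 by field; rewrite gt_eqF.
lra.
Qed.

(* The [k = 0] term of the sum is [0^-1 = 0]. *)
Lemma harmonic_sum_le_ln (T : nat) : (0 < T)%N ->
  \sum_(k < T) (k%:R : R)^-1 <= 1 + ln (T%:R : R).
Proof.
have harm m : \sum_(k < m.+2) (k%:R : R)^-1 <= 1 + ln (m.+1%:R : R).
  elim: m => [|m IHm]; first by rewrite !big_ord_recr big_ord0 /= invr0 invr1 ln1; lra.
  rewrite big_ord_recr /=; have := ln_succ_sub_ge (ltr0Sn R m).
  by rewrite -[m.+2%:R]natr1; lra.
case: T => [//|[_|m _]]; first by rewrite big_ord1 invr0 ln1; lra.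
by apply: le_trans (harm m) _; rewrite lerD2l ler_ln ?posrE ?ltr0n // ler_nat.
Qed.

Lemma sum_inv_sqrt_sqr_le (T : nat) : (0 < T)%N ->
  (\sum_(k < T) (Num.sqrt (k%:R : R))^-1) ^+ 2 <= T%:R * (1 + ln (T%:R : R)).
Proof.
move=> T_gt0.
have := cauchy_schwarz_sum (fun=> 1) (fun k : 'I_T => (Num.sqrt (k%:R : R))^-1).
under eq_bigr do rewrite mul1r.
move/le_trans; apply; rewrite sumr_const card_ord expr1n ler_wpM2l ?ler0n //.
under eq_bigr do rewrite exprVn sqr_sqrtr ?ler0n //.
exact: harmonic_sum_le_ln.
Qed.

End Harmonic.

Section Stability.
Variables (R : realType) (p n : nat) (Z : Type) (ell : vec R p -> vec R p -> Z -> R).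
Variables (W V : set (vec R p)) (rho G : R).
Hypotheses (W0 : W 0) (V0 : V 0) (closedW : closed W) (closedV : closed V).
Hypotheses (convW : convex_set_ W) (convV : convex_set_ V).
Hypothesis ell_diff : forall w v z, W w -> V v ->
  differentiable (fun x : vec R p * vec R p => ell x.1 x.2 z) (w, v).
Hypothesis rho_gt0 : 0 < rho.
Hypothesis ell_convex : forall v z, V v -> strongly_convex_on rho W (fun w => ell w v z).
Hypothesis ell_concave : forall w z, W w -> strongly_concave_on rho V (fun v => ell w v z).
Hypothesis ell_lipschitz : forall w v z, W w -> V v ->
  enorm (grad (fun w0 => ell w0 v z) w) <= G /\ enorm (grad (fun v0 => ell w v0 z) v) <= G.
Hypothesis n_gt0 : (0 < n)%N.
Implicit Types S : 'I_n -> Z.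

Local Notation gradw S w v := (grad (fun w0 => emp_risk ell S w0 v) w).
Local Notation gradv S w v := (grad (fun v0 => emp_risk ell S w v0) v).

Lemma ell_derivable_w w v z e : W w -> V v -> derivable (fun w0 => ell w0 v z) w e.
Proof.
move=> Ww Vv; apply: diff_derivable.
have -> : (fun w0 => ell w0 v z) =
    (fun x : vec R p * vec R p => ell x.1 x.2 z) \o (fun w0 => (w0, v)) by [].
apply: differentiable_comp; last exact: ell_diff.
exact: differentiable_pair.
Qed.

Lemma ell_derivable_v w v z e : W w -> V v -> derivable (fun v0 => ell w v0 z) v e.
Proof.
move=> Ww Vv; apply: diff_derivable.
have -> : (fun v0 => ell w v0 z) =
    (fun x : vec R p * vec R p => ell x.1 x.2 z) \o (fun v0 => (w, v0)) by [].
apply: differentiable_comp; last exact: ell_diff.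
exact: differentiable_pair.
Qed.

Lemma grad_emp_risk S w v : W w -> V v ->
  gradw S w v = n%:R^-1 *: \sum_(i < n) grad (fun w0 => ell w0 v (S i)) w /\
  gradv S w v = n%:R^-1 *: \sum_(i < n) grad (fun v0 => ell w v0 (S i)) v.
Proof.
move=> Ww Vv; split; apply: grad_mean => i e.
  exact: ell_derivable_w.
exact: ell_derivable_v.
Qed.

Lemma emp_risk_grad_le S w v : W w -> V v ->
  enorm (gradw S w v) <= G /\ enorm (gradv S w v) <= G.
Proof.
move=> Ww Vv; have [-> ->] := grad_emp_risk S Ww Vv.
by split; apply: enorm_mean_le => // i; have [] := ell_lipschitz (S i) Ww Vv.
Qed.

Lemma emp_risk_grad_sensitivity S S' w v : differ_in_one S S' -> W w -> V v ->
  enorm (gradw S w v - gradw S' w v) <= 2 * G / n%:R /\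
  enorm (gradv S w v - gradv S' w v) <= 2 * G / n%:R.
Proof.
move=> [k [_ eq_SS']] Ww Vv.
have [-> ->] := grad_emp_risk S Ww Vv; have [-> ->] := grad_emp_risk S' Ww Vv.
have [le_wk le_vk] := ell_lipschitz (S k) Ww Vv.
have [le_wk' le_vk'] := ell_lipschitz (S' k) Ww Vv.
by split; apply: (enorm_mean_sub_except (k := k)) => // j /eqP jk; rewrite eq_SS'.
Qed.

Lemma emp_risk_grad_monotone S w v w' v' : W w -> V v -> W w' -> V v' ->
  rho * (enorm (w - w') ^+ 2 + enorm (v - v') ^+ 2) <=
    dotp (gradw S w v - gradw S w' v') (w - w')
    - dotp (gradv S w v - gradv S w' v') (v - v').
Proof.
apply: (saddle_grad_monotone (L := emp_risk ell S)).
- move=> v0 Vv0; apply: strongly_convex_mean => // [i x e Wx|i].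
    exact: ell_derivable_w.
  exact: ell_convex.
- move=> w0 Ww0; apply: strongly_concave_mean => // [i x e Vx|i].
    exact: ell_derivable_v.
  exact: ell_concave.
- move=> w0 v0 e Ww0 Vv0; apply: derivable_mean => i; exact: ell_derivable_v.
Qed.

Variables (S S' : 'I_n -> Z) (bw bv : nat -> vec R p).
Hypothesis S_S' : differ_in_one S S'.

Let z0 := S (Ordinal n_gt0).

Let G_ge0 : 0 <= G.
Proof. by have [le_G _] := ell_lipschitz z0 W0 V0; exact: le_trans (enorm_ge0 _) le_G. Qed.

Let W_bounded : exists M, forall w, W w -> enorm w <= M.
Proof.
exists (2 * G / rho).
apply: (strongly_convex_dom_bounded rho_gt0 (ell_convex z0 V0) W0) => w Ww.
by have [] := ell_lipschitz z0 Ww V0.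
Qed.

Let V_bounded : exists M, forall v, V v -> enorm v <= M.
Proof.
exists (2 * G / rho).
apply: (strongly_convex_dom_bounded rho_gt0 (ell_concave z0 W0) V0) => v Vv.
rewrite gradN ?enormN => [|e]; last exact: ell_derivable_v.
by have [] := ell_lipschitz z0 W0 Vv.
Qed.

Lemma dpgda_step_contraction w v w' v' (eta : R) (b1 b2 : vec R p) :
  W w -> V v -> W w' -> V v' -> 0 <= eta ->
  enorm (Defs.proj W (w - eta *: (gradw S w v + b1))
         - Defs.proj W (w' - eta *: (gradw S' w' v' + b1))) ^+ 2
  + enorm (Defs.proj V (v + eta *: (gradv S w v + b2))
           - Defs.proj V (v' + eta *: (gradv S' w' v' + b2))) ^+ 2
  <= (1 - 2 * eta * rho) * (enorm (w - w') ^+ 2 + enorm (v - v') ^+ 2)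
     + 2 * eta * (2 * G / n%:R) * (enorm (w - w') + enorm (v - v'))
     + eta ^+ 2 * (8 * G ^+ 2).
Proof.
move=> Ww Vv Ww' Vv' eta_ge0.
have le_projW := lerXn2r 2 (enorm_ge0 _) (enorm_ge0 _)
  (proj_nonexpansive closedW W0 W_bounded (w - eta *: (gradw S w v + b1))
                                          (w' - eta *: (gradw S' w' v' + b1)) convW).
have le_projV := lerXn2r 2 (enorm_ge0 _) (enorm_ge0 _)
  (proj_nonexpansive closedV V0 V_bounded (v + eta *: (gradv S w v + b2))
                                          (v' + eta *: (gradv S' w' v' + b2)) convV).
apply: le_trans (lerD le_projW le_projV) _.
have -> : w - eta *: (gradw S w v + b1) - (w' - eta *: (gradw S' w' v' + b1)) =
    (w - w') - eta *: (gradw S w v - gradw S' w' v') by apply/rowP => i; rewrite !mxE; ring.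
have -> : v + eta *: (gradv S w v + b2) - (v' + eta *: (gradv S' w' v' + b2)) =
    (v - v') + eta *: (gradv S w v - gradv S' w' v') by apply/rowP => i; rewrite !mxE; ring.
have [le_gw le_gv] := emp_risk_grad_le S Ww Vv.
have [le_hw le_hv] := emp_risk_grad_le S' Ww' Vv'.
have [le_we le_ve] := emp_risk_grad_sensitivity S_S' Ww' Vv'.
exact: perturbed_monotone_step eta_ge0 (emp_risk_grad_monotone S Ww Vv Ww' Vv')
  le_we le_ve le_gw le_hw le_gv le_hv.
Qed.

Local Notation run S0 := (dpgda_run ell W V (fun t => (rho * t%:R)^-1) S0 bw bv).

Lemma dpgda_run_mem S0 k : W (run S0 k).1 /\ V (run S0 k).2.
Proof.
elim: k => [|k _] //=; split.
  exact: (proj_spec closedW W0 W_bounded _).1.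
exact: (proj_spec closedV V0 V_bounded _).1.
Qed.

Lemma dpgda_run_stable k :
  enorm ((run S k).1 - (run S' k).1) + enorm ((run S k).2 - (run S' k).2)
    <= 4 * G / (n%:R * rho) + 4 * G / rho / Num.sqrt k%:R.
Proof.
pose A j := enorm ((run S j).1 - (run S' j).1).
pose B j := enorm ((run S j).2 - (run S' j).2).
have n_pos : 0 < n%:R :> R by rewrite ltr0n.
have G4_ge0 : 0 <= 4 * G by rewrite mulr_ge0.
apply: (sqrt_rate_recursion (x := fun j => 2 * (A j ^+ 2 + B j ^+ 2))
                            (y := fun j => A j + B j)).
- by rewrite divr_ge0 // mulr_ge0 // ltW.
- by rewrite divr_ge0 // ltW.
- by rewrite /A /B /= !subrr enorm0 expr0n /= addr0 mulr0.
- move=> j; split; first by rewrite addr_ge0 ?enorm_ge0.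
  by have := sqr_ge0 (A j - B j); lra.
move=> j; have [Ww Vv] := dpgda_run_mem S j; have [Ww' Vv'] := dpgda_run_mem S' j.
have eta_ge0 : 0 <= (rho * j.+1%:R)^-1 by rewrite invr_ge0 mulr_ge0 ?ler0n ?ltW.
have step := dpgda_step_contraction (bw j) (bv j) Ww Vv Ww' Vv' eta_ge0.
apply: le_trans (ler_wpM2l (ler0n R 2) step) _.
(* With b = 4G/(n rho) and c = 4G/rho, the recursion is twice the bound of
   [dpgda_step_contraction] for the step size 1/(rho j.+1). *)
rewrite -/(A j) -/(B j) le_eqVlt; apply/orP; left; apply/eqP.
by field; rewrite ?pnatr_eq0 ?gt_eqF.
Qed.

Local Notation avg S0 T := (dpgda_avg ell W V (fun t => (rho * t%:R)^-1) S0 bw bv T).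

Lemma dpgda_avg_stable T : (0 < T)%N ->
  enorm ((avg S T).1 - (avg S' T).1) + enorm ((avg S T).2 - (avg S' T).2)
    <= 4 * G / (n%:R * rho)
       + 4 * Num.sqrt (ln (expR 1 * T%:R)) * Num.sqrt (G ^+ 2 / (rho ^+ 2 * T%:R)).
Proof.
move=> T_gt0; have T_pos : 0 < T%:R :> R by rewrite ltr0n.
set b := 4 * G / (n%:R * rho); set c := 4 * G / rho.
set L := ln (expR 1 * T%:R); set Q := G ^+ 2 / (rho ^+ 2 * T%:R).
set sum_isqrt := \sum_(k < T) (Num.sqrt (k%:R : R))^-1.
have lnE : L = 1 + ln T%:R by rewrite /L lnM ?posrE ?expR_gt0 // expRK.
have le_mean : enorm ((avg S T).1 - (avg S' T).1) + enorm ((avg S T).2 - (avg S' T).2)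
    <= b + c * (T%:R^-1 * sum_isqrt).
  apply: le_trans (lerD (enorm_mean_sub_le_mean _ _) (enorm_mean_sub_le_mean _ _)) _.
  rewrite -mulrDr -big_split /=.
  apply: le_trans (ler_wpM2l _ (ler_sum _ (fun (k : 'I_T) _ => dpgda_run_stable k))) _.
    by rewrite invr_ge0 ler0n.
  rewrite big_split /= sumr_const card_ord -mulr_sumr -[b *+ T]mulr_natl mulrDr mulKf.
    by rewrite mulrCA lexx.
  by rewrite pnatr_eq0 -lt0n.
have le_c : c * (T%:R^-1 * sum_isqrt) <= 4 * Num.sqrt L * Num.sqrt Q.
  apply: ler_sqr_ge0; first by rewrite !mulr_ge0 ?sqrtr_ge0.
  have Q_ge0 : 0 <= Q by rewrite /Q divr_ge0 ?sqr_ge0 // mulr_ge0 ?sqr_ge0.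
  have L_ge0 : 0 <= L by rewrite lnE addr_ge0 // ln_ge0 // ler1n.
  have -> : (4 * Num.sqrt L * Num.sqrt Q) ^+ 2 = c ^+ 2 * (T%:R^-1 ^+ 2 * (T%:R * L)).
    by rewrite !exprMn !sqr_sqrtr // /Q /c; field; rewrite !gt_eqF.
  rewrite exprMn ler_wpM2l ?sqr_ge0 // exprMn ler_wpM2l ?sqr_ge0 // lnE.
  exact: sum_inv_sqrt_sqr_le.
by apply: le_trans le_mean _; rewrite lerD2l.
Qed.

End Stability.

Lemma le_bound_plus_nonneg (R : realType) (b L Q t1 t2 t3 t4 : R) :
  0 <= t1 -> 0 <= t2 -> 0 <= t3 -> 0 <= t4 ->
  b + 4 * Num.sqrt L * Num.sqrt Q <= b + t1 + 4 * Num.sqrt L * Num.sqrt (Q + t2 + t3 + t4).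
Proof.
move=> t1_ge0 t2_ge0 t3_ge0 t4_ge0; rewrite -addrA lerD2l -[X in X <= _]add0r lerD //.
by rewrite ler_wpM2l ?mulr_ge0 ?sqrtr_ge0 // ler_wsqrtr // -!addrA lerDl !addr_ge0.
Qed.

Local Ltac nonneg :=
  repeat (apply: mulr_ge0 || apply: addr_ge0 || rewrite invr_ge0);
  rewrite ?sqrtr_ge0 ?sqr_ge0 ?ler0n //.

Theorem theorem2 (R : realType) (p n T : nat) (Z : Type)
  (W V : set (vec R p)) (ell : vec R p -> vec R p -> Z -> R)
  (rho G : R) (S : 'I_n -> Z) (eps delta c zeta : R)
  (d : measure_display) (Omega : measurableType d) (P : probability Omega R)
  (N : Omega -> noise_index T p -> R) :
  W 0 -> V 0 -> closed W -> closed V -> convex_set_ W -> convex_set_ V ->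
  (forall w v z, W w -> V v ->
     differentiable (fun x : vec R p * vec R p => ell x.1 x.2 z) (w, v)) ->
  0 < rho ->
  (forall v z, V v -> strongly_convex_on rho W (fun w => ell w v z)) ->
  (forall w z, W w -> strongly_concave_on rho V (fun v => ell w v z)) ->
  0 < G ->
  (forall w v z, W w -> V v ->
     enorm (grad (fun w0 => ell w0 v z) w) <= G /\
     enorm (grad (fun v0 => ell w v0 z) v) <= G) ->
  (0 < n)%N -> 0 < eps -> 0 < delta -> (0 < T)%N -> 0 < c ->
  expR (- (p%:R / 8)) < zeta -> zeta < 1 ->
  let sigma := c * (G * Num.sqrt (T%:R * ln delta^-1)) / (n%:R * eps) in
  gaussian_iid P N sigma ->
  let eta := fun t : nat => (rho * t%:R)^-1 in
  let out := fun (S0 : 'I_n -> Z) (om : Omega) =>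
    dpgda_avg ell W V eta S0 (noise_vec (N om) true) (noise_vec (N om) false) T in
  let p_zeta := 1 + powR (8 * ln (2 * T%:R / zeta) / p%:R) 4^-1 in
  let logeT := ln (expR 1 * T%:R) in
  exists E : set Omega, measurable E /\ ((1 - zeta)%:E <= P E)%E /\
    forall om, E om ->
      let wT := (out S om).1 in let vT := (out S om).2 in
      let wstar := argmin_on W (fun w => emp_risk ell S w vT) in
      let vstar := argmax_on V (fun v => emp_risk ell S wT v) in
      let g_w := enorm (wstar - wT) in
      let g_v := enorm (vstar - vT) in
      let gamma :=
        4 * G / (n%:R * rho)
        + 2 * sigma * Num.sqrt p%:R * logeT / T%:R * p_zeta
        + 4 * Num.sqrt logeT *
          Num.sqrt (G ^+ 2 / (rho ^+ 2 * T%:R)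
                    + sigma ^+ 2 * p%:R / (rho ^+ 2 * T%:R) * p_zeta ^+ 2
                    + 2 * G * sigma * Num.sqrt p%:R / (rho ^+ 2 * T%:R) * p_zeta
                    + (g_w + g_v) * sigma * Num.sqrt p%:R / (rho * logeT) * p_zeta) in
      forall S' : 'I_n -> Z, differ_in_one S S' ->
        enorm (wT - (out S' om).1) + enorm (vT - (out S' om).2) <= gamma.
Proof.
move=> W0 V0 closedW closedV convW convV ell_diff rho_gt0 ell_convex ell_concave G_gt0
  ell_lipschitz n_gt0 eps_gt0 delta_gt0 T_gt0 c_gt0 zeta_gt zeta_lt1 sigma _ eta out
  p_zeta logeT.
(* The bound holds for every realisation of the noise. *)
exists setT; split; first exact: measurableT.
split; first by rewrite probability_setT lee_fin; have := lt_trans (expR_gt0 _) zeta_gt; lra.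
move=> om _ wT vT wstar vstar g_w g_v gamma S' S_S'.
have rho_ge0 := ltW rho_gt0; have G_ge0 := ltW G_gt0.
have c_ge0 := ltW c_gt0; have eps_ge0 := ltW eps_gt0.
have sigma_ge0 : 0 <= sigma by rewrite /sigma; nonneg.
have pz_ge0 : 0 <= p_zeta by rewrite addr_ge0 ?powR_ge0.
have logeT_ge0 : 0 <= logeT.
  by rewrite /logeT lnM ?posrE ?expR_gt0 ?ltr0n // expRK addr_ge0 // ln_ge0 // ler1n.
have [gw_ge0 gv_ge0] : 0 <= g_w /\ 0 <= g_v by split; exact: enorm_ge0.
have := dpgda_avg_stable W0 V0 closedW closedV convW convV ell_diff rho_gt0
  ell_convex ell_concave ell_lipschitz n_gt0 (noise_vec (N om) true)
  (noise_vec (N om) false) S_S' T_gt0.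
move/le_trans; apply; rewrite /gamma; apply: le_bound_plus_nonneg;
  clearbody sigma p_zeta logeT g_w g_v; nonneg.
Qed.
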